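(* Let $m\ge2$ and $n\ge1$ be integers, let $f_i:\mathbb{R}^n\to\mathbb{R}$, $i=1,\dots,m$, be lower semicontinuous, proper and strictly convex, and let $a\ge 0$ and $\mathcal{Z}=\{\mathbf{z}\in\mathbb{R}^n\mid\|\mathbf{z}\|_\infty\le a\}$. Set $\mathcal{Y}=\mathcal{Z}^m\subseteq\mathbb{R}^{nm}$, $f_0(\mathbf{y})=\frac1m\sum_{i=1}^m f_i(\mathbf{y}_i)$ for $\mathbf{y}=[\mathbf{y}_1^{\mathsf T}\ \cdots\ \mathbf{y}_m^{\mathsf T}]^{\mathsf T}$, and $f=f_0+\delta_{\mathcal{Y}}$. Assume that for every $\bar{\mathbf{y}}\in\operatorname{bnd}\mathcal{Y}$ there exist a sequence $(\mathbf{y}_k)$ in $\mathcal{Y}$ with $\mathbf{y}_k\to\bar{\mathbf{y}}$ and subgradients $\boldsymbol{\nu}_k\in\partial f(\mathbf{y}_k)$ with $\limsup_k\|\boldsymbol{\nu}_k\|_2<\infty$. Let $\mathbf{A}\in\mathbb{R}^{n(m-1)\times nm}$ be the block matrix whose $i$-th block row ($i=1,\dots,m-1$) has $\mathbf{I}_n$ in block column $i$, $-\mathbf{I}_n$ in block column $i+1$, and zeros elsewhere. Let $\bar{\mathbf{y}}=[\bar{\mathbf{y}}_1^{\mathsf T}\ \cdots\ \bar{\mathbf{y}}_m^{\mathsf T}]^{\mathsf T}$ with $\bar{\mathbf{y}}_i=a\mathbf{1}_n$ for $i$ odd and $\bar{\mathbf{y}}_i=-a\mathbf{1}_n$ for $i$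 even, and let $\beta>0$. Then there exist $\boldsymbol{\eta}\in\mathbb{R}^{nm}$ and $\boldsymbol{\mu}\in\mathbb{R}^{n(m-1)}$ satisfying $$\mathbf{A}\bar{\mathbf{y}}=\beta(\mathbf{A}\mathbf{A}^{\mathsf T})^{-1}\mathbf{A}\boldsymbol{\eta},\qquad \boldsymbol{\eta}\in N_{\mathcal{Y}}(\bar{\mathbf{y}}),\qquad \mathbf{A}^{\mathsf T}\boldsymbol{\mu}=\boldsymbol{\eta}.$$
   Context: $\delta_{\mathcal{Y}}$ is the indicator function of $\mathcal{Y}$, $\partial$ the convex subdifferential, $N_{\mathcal{Y}}(\bar{\mathbf{y}})$ the normal cone of the convex set $\mathcal{Y}$ at $\bar{\mathbf{y}}$, $\mathbf{1}_n$ the all-ones vector in $\mathbb{R}^n$, $\mathbf{I}_n$ the identity. (This is the feasibility problem associated with the consensus problem: minimize $f_0(\mathbf{y})$ subject to $\mathbf{y}_i\in\mathcal{Z}$ for all $i$ and $\mathbf{A}\mathbf{y}=\mathbf{0}$.) *)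

From mathcomp Require Import all_boot all_algebra.
From mathcomp Require Import all_classical all_reals all_analysis.
Import GRing.Theory Num.Theory numFieldNormedType.Exports.
Local Open Scope ring_scope.
Local Open Scope classical_set_scope.

Set Implicit Arguments.
Unset Strict Implicit.
Unset Printing Implicit Defensive.

Section Defs.
Variable R : realType.

Definition inner (N : nat) (u v : 'cV[R]_N) : R := \sum_(p < N) u p 0 * v p 0.
Definition norm2 (N : nat) (u : 'cV[R]_N) : R := Num.sqrt (inner u u).

Definition strictly_convex (N : nat) (g : 'cV[R]_N -> R) : Prop :=
  forall (x y : 'cV[R]_N) (t : R), x != y -> 0 < t < 1 ->
    g (t *: x + (1 - t) *: y) < t * g x + (1 - t) * g y.

Definition proper_fun (N : nat) (g : 'cV[R]_N -> \bar R) : Prop :=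
  (forall x, g x != -oo%E) /\ (exists x, g x != +oo%E).

Definition Zbox (n : nat) (a : R) : set 'cV[R]_n :=
  [set z | forall j : 'I_n, `|z j 0| <= a].

Lemma blk_idx_proof (m n : nat) (i : 'I_m) (j : 'I_n) : (i * n + j < m * n)%N.
Proof.
have hi := ltn_ord i; have hj := ltn_ord j.
apply: (@leq_trans (i * n + n)); first by rewrite ltn_add2l.
by rewrite -[X in (_ + X)%N]mul1n -mulnDl addn1 leq_mul2r hi orbT.
Qed.

Definition blk_idx (m n : nat) (i : 'I_m) (j : 'I_n) : 'I_(m * n) :=
  Ordinal (blk_idx_proof i j).

Definition blk (m n : nat) (y : 'cV[R]_(m * n)) (i : 'I_m) : 'cV[R]_n :=
  \col_(j < n) y (blk_idx i j) 0.

Definition Ybox (m n : nat) (a : R) : set 'cV[R]_(m * n) :=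
  [set y | forall i : 'I_m, Zbox a (blk y i)].

Definition f0 (m n : nat) (fs : 'I_m -> 'cV[R]_n -> R) (y : 'cV[R]_(m * n)) : R :=
  (m%:R)^-1 * \sum_(i < m) fs i (blk y i).

Definition indic (N : nat) (C : set 'cV[R]_N) (y : 'cV[R]_N) : \bar R :=
  if `[< C y >] then 0%E else +oo%E.

Definition fcons (m n : nat) (fs : 'I_m -> 'cV[R]_n -> R) (a : R)
  (y : 'cV[R]_(m * n)) : \bar R :=
  ((f0 fs y)%:E + indic (@Ybox m n a) y)%E.

Definition subdiff (N : nat) (g : 'cV[R]_N -> \bar R) (x : 'cV[R]_N) : set 'cV[R]_N :=
  [set nu | g x \is a fin_num /\
            forall z, (g x + (inner nu (z - x))%:E <= g z)%E].

Definition normal_cone (N : nat) (C : set 'cV[R]_N) (x : 'cV[R]_N) : set 'cV[R]_N :=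
  [set eta | C x /\ forall y, C y -> inner eta (y - x) <= 0].

Definition bnd (N : nat) (C : set 'cV[R]_N) : set 'cV[R]_N :=
  closure C `\` interior C.

(* A in R^{n(m-1) x nm}: block row i has I_n at block column i, -I_n at i+1 *)
Definition Acons (m n : nat) : 'M[R]_(m.-1 * n, m * n) :=
  \matrix_(p < m.-1 * n, q < m * n)
    (if (p %% n == q %% n)%N then
       (if (q %/ n == p %/ n)%N then 1
        else if (q %/ n == (p %/ n).+1)%N then -1 else 0)
     else 0).

(* ybar: block i (1-based) equals a 1_n for i odd and -a 1_n for i even;
   with 0-based block index k = q %/ n this is: a if k even, -a if k odd *)
Definition ybar (m n : nat) (a : R) : 'cV[R]_(m * n) :=
  \col_(q < m * n) (if odd (q %/ n) then - a else a).

End Defs.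

Arguments Ybox {R} m n a _.
Arguments Acons {R} m n.
Arguments ybar {R} m n a.

From mathcomp Require Import all_boot all_algebra.
From mathcomp Require Import all_classical all_reals all_analysis.
From mathcomp Require Import zify ring.
Import order.Order.TTheory GRing.Theory Num.Theory numFieldNormedType.Exports.
Local Open Scope ring_scope.
Local Open Scope classical_set_scope.
Set Implicit Arguments.
Unset Strict Implicit.
Unset Printing Implicit Defensive.

(* Take mu := beta^-1 A ybar and eta := A^T mu.  The first identity only needs
   A A^T to be invertible, which holds because A has full row rank.  Adjacent
   blocks of ybar have opposite signs, so A ybar is 2 ybar on the first m - 1
   blocks, and A^T A ybar is ybar scaled coordinatewise by twice the number
   (1 or 2) of blocks adjacent to the block of the coordinate.  Hence eta is a
   nonnegative coordinatewise multiple of the vertex ybar of the box Y: it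
   points outward and lies in the normal cone. *)

Section GramMatrix.
Variable R : realFieldType.

Lemma mulmx_trmx_self_eq0 p (u : 'rV[R]_p) : u *m u^T = 0 -> u = 0.
Proof.
move=> /(congr1 (fun M : 'M[R]_1 => M 0 0)); rewrite !mxE => sum_sq0.
have sq_ge0 (k : 'I_p) : true -> 0 <= u 0 k * u^T k 0.
  by rewrite mxE -expr2 sqr_ge0.
apply/rowP => k; have /eqP := psumr_eq0P sq_ge0 sum_sq0 (i := k) isT.
by rewrite !mxE mulf_eq0 orbb => /eqP.
Qed.

Lemma mulmx_trmx_unit p q (A : 'M[R]_(p, q)) :
  row_free A -> A *m A^T \in unitmx.
Proof.
move=> freeA; rewrite -row_free_unit; apply: inj_row_free => v vAAt0.
apply: (row_free_inj freeA); rewrite mul0mx; apply: mulmx_trmx_self_eq0.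
by rewrite trmx_mul mulmxA -(mulmxA v) vAAt0 mul0mx.
Qed.

End GramMatrix.

Section VectorEntries.
Variable R : ringType.

(* Entry k of a column vector, with junk value 0 out of range, so that the
   shifted indices k + n and k - n need no bound proofs. *)
Definition ventry N (x : 'cV[R]_N) (k : nat) : R :=
  if (insub k : option 'I_N) is Some q then x q 0 else 0.

Lemma ventry_ord N (x : 'cV[R]_N) (q : 'I_N) : ventry x q = x q 0.
Proof. by rewrite /ventry valK. Qed.

Lemma ventry_out N (x : 'cV[R]_N) k : (N <= k)%N -> ventry x k = 0.
Proof. by move=> Nk; rewrite /ventry insubN // -leqNgt. Qed.

Lemma sum_eqn_ventry N (x : 'cV[R]_N) k :
  \sum_(q < N) ((q : nat) == k)%:R * x q 0 = ventry x k.
Proof.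
under eq_bigr => q _ do rewrite mulr_natl mulrb.
rewrite -big_mkcond /=; have [kN | Nk] := ltnP k N.
  by rewrite (big_pred1 (Ordinal kN)) -?ventry_ord // => q; rewrite -val_eqE.
rewrite ventry_out // big_pred0 // => q; apply/negbTE.
by rewrite neq_ltn (leq_trans (ltn_ord q) Nk).
Qed.

End VectorEntries.

Lemma eqn_divmod (d x y : nat) : (0 < d)%N ->
  (x == y) = ((x %/ d == y %/ d) && (x %% d == y %% d))%N.
Proof.
move=> d_gt0; apply/eqP/andP => [-> // | [/eqP eq_div /eqP eq_mod]].
by rewrite (divn_eq x d) (divn_eq y d) eq_div eq_mod.
Qed.

Lemma ord_mul_gt0r m n (i : 'I_(m * n)) : (0 < n)%N.
Proof. by case: n i => [|//]; rewrite muln0 => -[]. Qed.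

Section ConsensusMatrix.
Variables (R : realType) (m n : nat).
Local Notation A := (@Acons R m n).

Lemma AconsE (p : 'I_(m.-1 * n)) (q : 'I_(m * n)) :
  A p q = ((q : nat) == p)%:R - ((q : nat) == p + n)%N%:R.
Proof.
have n_gt0 := ord_mul_gt0r p.
rewrite mxE (eqn_divmod q p n_gt0) (eqn_divmod q (p + n) n_gt0).
rewrite addnC modnDl divnDl ?dvdnn // divnn n_gt0 add1n [p == q %[mod n]]eq_sym.
case: (q == p %[mod n]); rewrite ?andbT ?andbF ?subrr //.
have [-> | _] := eqVneq (q %/ n)%N (p %/ n)%N.
  by rewrite (ltn_eqF (ltnSn _)) subr0.
by case: ifP => _; rewrite /= ?mulr0n ?mulr1n ?sub0r ?subr0 ?oppr0; reflexivity.
Qed.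

Lemma Acons_mulE (x : 'cV[R]_(m * n)) (p : 'I_(m.-1 * n)) :
  (A *m x) p 0 = ventry x p - ventry x (p + n).
Proof.
rewrite mxE; under eq_bigr do rewrite AconsE mulrBl.
by rewrite sumrB !sum_eqn_ventry.
Qed.

Lemma trAcons_mulE (w : 'cV[R]_(m.-1 * n)) (q : 'I_(m * n)) :
  (A^T *m w) q 0 = ventry w q - (n <= q)%N%:R * ventry w (q - n).
Proof.
rewrite mxE; under eq_bigr do rewrite mxE AconsE mulrBl.
rewrite sumrB; under eq_bigr do rewrite eq_sym.
rewrite sum_eqn_ventry; congr (_ - _); have [nq | qn] := leqP n q.
  rewrite mul1r -sum_eqn_ventry; apply: eq_bigr => p _.
  by congr (_%:R * _); apply/eqP/eqP; lia.
rewrite mul0r big1 // => p _.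
by rewrite ltn_eqF ?mul0r //; apply: ltn_addl.
Qed.

Lemma Acons_row_free : (0 < n)%N -> row_free A.
Proof.
move=> n_gt0; apply: inj_row_free => v vA0.
have Atv0 : A^T *m v^T = 0 by rewrite -trmx_mul vA0 trmx0.
suff v0 k : ventry v^T k = 0.
  by apply/rowP => j; have := v0 j; rewrite ventry_ord !mxE.
elim/ltn_ind: k => k IHk; have [km | mk] := ltnP k (m.-1 * n); last first.
  by rewrite ventry_out.
have km' : (k < m * n)%N by rewrite (leq_trans km) // leq_mul2r leq_pred orbT.
have := congr1 (fun M : 'cV[R]_(m * n) => M (Ordinal km') 0) Atv0.
rewrite trAcons_mulE /= mxE; have [nk | kn] := leqP n k.
  by rewrite (IHk (k - n)%N) ?mulr0 ?subr0 //; lia.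
by rewrite mul0r subr0.
Qed.

Definition alt_sign (a : R) (k : nat) : R := if odd (k %/ n) then - a else a.

Lemma alt_signDn a k : (0 < n)%N -> alt_sign a (k + n) = - alt_sign a k.
Proof.
move=> n_gt0; rewrite /alt_sign divnDr ?dvdnn // divnn n_gt0 addn1 /=.
by case: odd; rewrite ?opprK.
Qed.

Lemma ventry_ybar a k : (k < m * n)%N -> ventry (ybar m n a) k = alt_sign a k.
Proof.
by move=> kmn; rewrite -[k]/(nat_of_ord (Ordinal kmn)) ventry_ord mxE.
Qed.

Lemma ventry_Acons_ybar a k :
  ventry (A *m ybar m n a) k = (k < m.-1 * n)%N%:R * (2 * alt_sign a k).
Proof.
have [km | mk] := ltnP k (m.-1 * n); last by rewrite ventry_out ?mul0r.
have n_gt0 := ord_mul_gt0r (Ordinal km).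
have m_gt0 : (0 < m)%N by case: m km.
have kn_mn : (k + n < m * n)%N by rewrite -(prednK m_gt0) mulSn; lia.
rewrite -[k]/(nat_of_ord (Ordinal km)) ventry_ord Acons_mulE /= mul1r.
rewrite !ventry_ybar ?alt_signDn //; first by rewrite opprK mulr2n mulrDl mul1r.
lia.
Qed.

Lemma trAcons_Acons_ybar a (q : 'I_(m * n)) :
  (A^T *m (A *m ybar m n a)) q 0 =
    2 * ((q < m.-1 * n)%N%:R + (n <= q)%N%:R) * ybar m n a q 0.
Proof.
have n_gt0 := ord_mul_gt0r q.
rewrite trAcons_mulE !ventry_Acons_ybar mxE -/(alt_sign a q).
have [nq | qn] /= := leqP n q.
  have qn_mn : (q - n < m.-1 * n)%N.
    have m_gt0 : (0 < m)%N by case: m {nq} q => [[]|].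
    have : (q < m.-1 * n + n)%N by rewrite -mulSnr prednK.
    lia.
  have -> : alt_sign a q = - alt_sign a (q - n).
    by rewrite -{1}(subnK nq) alt_signDn.
  rewrite qn_mn /=; ring.
ring.
Qed.

End ConsensusMatrix.

Lemma outward_mulrB_le0 (R : realDomainType) (e s y : R) :
  0 <= e * s -> `|y| <= `|s| -> e * (y - s) <= 0.
Proof.
move=> es_ge0 ys; rewrite mulrBr subr_le0 (le_trans (ler_norm _)) //.
by rewrite -[e * s]ger0_norm // !normrM ler_wpM2l.
Qed.

Section BoxVertex.
Variables (R : realType) (m n : nat) (a : R).

Lemma Ybox_coord (y : 'cV[R]_(m * n)) (q : 'I_(m * n)) :
  Ybox m n a y -> `|y q 0| <= a.
Proof.
have n_gt0 := ord_mul_gt0r q.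
have q_m : (q %/ n < m)%N by rewrite ltn_divLR.
have q_n : (q %% n < n)%N by rewrite ltn_pmod.
move=> /(_ (Ordinal q_m) (Ordinal q_n)); rewrite mxE.
suff -> : blk_idx (Ordinal q_m) (Ordinal q_n) = q by [].
by apply/val_inj; rewrite /= -divn_eq.
Qed.

Lemma normal_cone_Ybox_vertex (x eta : 'cV[R]_(m * n)) :
  (forall q, `|x q 0| = a) -> (forall q, 0 <= eta q 0 * x q 0) ->
  normal_cone (Ybox m n a) x eta.
Proof.
move=> x_vertex eta_out; split=> [i j | y Yy]; first by rewrite mxE x_vertex.
apply: sumr_le0 => q _; rewrite !mxE.
by apply: outward_mulrB_le0; rewrite ?x_vertex ?Ybox_coord.
Qed.

End BoxVertex.

Theorem lemma2 (R : realType) (m n : nat) (hm : (2 <= m)%N) (hn : (1 <= n)%N)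
  (fs : 'I_m -> 'cV[R]_n -> R)
  (hlsc : forall i, lower_semicontinuous (fun x => (fs i x)%:E))
  (hproper : forall i, proper_fun (fun x => (fs i x)%:E))
  (hconv : forall i, strictly_convex (fs i))
  (a : R) (ha : 0 <= a)
  (hbnd : forall yb : 'cV[R]_(m * n), bnd (Ybox m n a) yb ->
     exists (y : nat -> 'cV[R]_(m * n)) (nu : nat -> 'cV[R]_(m * n)),
       (forall k, Ybox m n a (y k)) /\
       y @ \oo --> yb /\
       (forall k, subdiff (fcons fs a) (y k) (nu k)) /\
       (limn_esup (fun k => (norm2 (nu k))%:E) < +oo)%E)
  (beta : R) (hbeta : 0 < beta) :
  exists (eta : 'cV[R]_(m * n)) (mu : 'cV[R]_(m.-1 * n)),
    Acons m n *m ybar m n a =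
      beta *: (invmx (Acons m n *m (Acons m n)^T) *m Acons m n *m eta) /\
    normal_cone (Ybox m n a) (ybar m n a) eta /\
    (Acons m n)^T *m mu = eta.
Proof.
set A := Acons m n; set mu := beta^-1 *: (A *m ybar m n a).
exists (A^T *m mu), mu; split; [|split] => //.
  rewrite mulmxA -(mulmxA (invmx _)) mulVmx.
    by rewrite mul1mx scalerA mulfV ?scale1r ?gt_eqF.
  exact/mulmx_trmx_unit/Acons_row_free.
apply: normal_cone_Ybox_vertex => q.
  by rewrite mxE; case: odd; rewrite ?normrN ger0_norm.
rewrite -scalemxAr mxE trAcons_Acons_ybar -!mulrA -expr2.
apply: mulr_ge0; first by rewrite invr_ge0 ltW.
by apply: mulr_ge0 => //; apply: mulr_ge0; [exact: addr_ge0 | exact: sqr_ge0].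
Qed.
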